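(* Let $n,p\ge1$ be integers and let $\mathbf{A}^{p+1}_{n+1}$ be as defined in the context. Then $\mathbf{A}^{p+1}_{n+1}$ is local: it has a unique maximal proper implicative filter, namely ${\uparrow}\langle(0,0),p\rangle=\{a\in A:a\ge\langle(0,0),p\rangle\}$; consequently $\mathrm{Rad}(\mathbf{A}^{p+1}_{n+1})={\uparrow}\langle(0,0),p\rangle$.
   Context: Order $\mathbb{Z}\times\mathbb{Z}$ lexicographically: $(m,r)\preccurlyeq(k,s)$ iff $m<k$, or $m=k$ and $r\le s$; addition/subtraction of pairs is componentwise, and $\min,\max$ of pairs refer to $\preccurlyeq$. For an integer $n\ge1$ let $L^\omega_{n+1}=\{(m,r)\in\mathbb{Z}^2:(0,0)\preccurlyeq(m,r)\preccurlyeq(n,0)\}$ with $x\ast y=\max\{(0,0),x+y-(n,0)\}$ and $x\to y=\min\{(n,0),(n,0)-x+y\}$. For an integer $p\ge1$ let $L_{p+1}=\{0,1,\dots,p\}$ with $\alpha\ast\beta=\max\{0,\alpha+\beta-p\}$. Define $$A=A^{p+1}_{n+1}=\{\langle(m,r),\alpha\rangle:(m,r)\in L^\omega_{n+1},\ \alpha\in\{0,p\}\}\cup\{\langle(m,r),\alpha\rangle:(0,0)\preccurlyeq(m,r)\preccurlyeq(n-1,0),\ 0<\alpha<p\}.$$ Order: $\langle(m,r),\alpha\rangle\le\langle(k,s),\beta\rangle$ iff one of: (o1) $\alpha\neq0$, $\alpha\le\beta$ and $(m,r)\preccurlyeq(k,s)$; (o2) $\alpha=\beta=0$ and $(k,s)\preccurlyeq(m,r)$;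 (o3) $\alpha=0$, $\beta\ne0$ and $(n-1,0)\preccurlyeq(m+k,r+s)$. $\wedge,\vee$ denote meet and join for $\le$. Put $\bot=\langle(n,0),0\rangle$, $\top=\langle(n,0),p\rangle$. For $a=\langle(m,r),\alpha\rangle$, $b=\langle(k,s),\beta\rangle\in A$ define $a\odot b$ by: (P1) if $\alpha,\beta\ge1$ and $\alpha+\beta>p$: $a\odot b=\langle(m,r)\ast(k,s),\alpha+\beta-p\rangle$; (P2) if $\alpha,\beta\ge1$ and $\alpha+\beta\le p$: $a\odot b=\langle\min\{(n,0),(2n-(m+k+1),-(r+s))\},0\rangle$; (P3) if $\alpha\ge1$, $\beta=0$: $a\odot b=\langle(m,r)\to(k,s),0\rangle$, and if $\alpha=0$, $\beta\ge1$: $a\odot b=\langle(k,s)\to(m,r),0\rangle$; (P4) if $\alpha=\beta=0$: $a\odot b=\langle\min\{(n,0),(m+k+1,r+s)\},0\rangle$. Define $\sim\langle(m,r),\alpha\rangle=\langle(m,r),p-\alpha\rangle$ if $\alpha\in\{0,p\}$, and $\sim\langle(m,r),\alpha\rangle=\langle(n-1-m,-r),p-\alpha\rangle$ if $0<\alpha<p$. Define $a\Rightarrow b=\sim(a\odot\sim b)$. The algebra $\mathbf{A}^{p+1}_{n+1}$ is $\langle A;\odot,\Rightarrow,\wedge,\vee,\bot,\top\rangle$. An implicative filter is a subset $F\subseteq A$ with $\top\in F$, closed under $\odot$, and upward closed w.r.t. $\le$; it is proper if $F\ne A$. $\mathrm{Rad}(\mathbf{A}^{p+1}_{n+1})$ is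 the intersection of all maximal proper implicative filters. *)

From Stdlib Require Import ZArith Bool.
Open Scope bool_scope.
Open Scope Z_scope.

Definition lex_le (x y : Z * Z) : Prop :=
  fst x < fst y \/ (fst x = fst y /\ snd x <= snd y).

Definition lex_leb (x y : Z * Z) : bool :=
  (fst x <? fst y) || ((fst x =? fst y) && (snd x <=? snd y)).

Definition lex_min (x y : Z * Z) : Z * Z := if lex_leb x y then x else y.
Definition lex_max (x y : Z * Z) : Z * Z := if lex_leb x y then y else x.

Definition padd (x y : Z * Z) : Z * Z := (fst x + fst y, snd x + snd y).
Definition psub (x y : Z * Z) : Z * Z := (fst x - fst y, snd x - snd y).

(* The MV-like operations on L^omega_{n+1}. *)
Definition lstar (n : Z) (x y : Z * Z) : Z * Z :=
  lex_max (0, 0) (psub (padd x y) (n, 0)).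
Definition larrow (n : Z) (x y : Z * Z) : Z * Z :=
  lex_min (n, 0) (padd (psub (n, 0) x) y).

(* An element <(m,r),alpha> is encoded as ((m,r), alpha). *)
Definition elt := ((Z * Z) * Z)%type.

Definition inA (n p : Z) (a : elt) : Prop :=
  let (x, al) := a in
  (lex_le (0, 0) x /\ lex_le x (n, 0) /\ (al = 0 \/ al = p)) \/
  (lex_le (0, 0) x /\ lex_le x (n - 1, 0) /\ 0 < al < p).

Definition leA (n : Z) (a b : elt) : Prop :=
  let (x, al) := a in let (y, be) := b in
  (al <> 0 /\ al <= be /\ lex_le x y) \/
  (al = 0 /\ be = 0 /\ lex_le y x) \/
  (al = 0 /\ be <> 0 /\ lex_le (n - 1, 0) (padd x y)).

Definition botA (n : Z) : elt := ((n, 0), 0).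
Definition topA (n p : Z) : elt := ((n, 0), p).

(* The product (P1)-(P4). *)
Definition odot (n p : Z) (a b : elt) : elt :=
  let (x, al) := a in let (y, be) := b in
  if (1 <=? al) && (1 <=? be) then
    if p <? al + be then (lstar n x y, al + be - p)
    else (lex_min (n, 0) (2 * n - (fst x + fst y + 1), - (snd x + snd y)), 0)
  else if (1 <=? al) then (larrow n x y, 0)
  else if (1 <=? be) then (larrow n y x, 0)
  else (lex_min (n, 0) (fst x + fst y + 1, snd x + snd y), 0).

Definition simA (n p : Z) (a : elt) : elt :=
  let (x, al) := a in
  if (al =? 0) || (al =? p) then (x, p - al)
  else ((n - 1 - fst x, - snd x), p - al).

Definition implA (n p : Z) (a b : elt) : elt :=
  simA n p (odot n p a (simA n p b)).

Definition implicative_filter (n p : Z) (F : elt -> Prop) : Prop :=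
  (forall a, F a -> inA n p a) /\
  F (topA n p) /\
  (forall a b, F a -> F b -> F (odot n p a b)) /\
  (forall a b, F a -> inA n p b -> leA n a b -> F b).

Definition proper_filter (n p : Z) (F : elt -> Prop) : Prop :=
  implicative_filter n p F /\ exists a, inA n p a /\ ~ F a.

Definition maximal_filter (n p : Z) (F : elt -> Prop) : Prop :=
  proper_filter n p F /\
  forall G, proper_filter n p G -> (forall a, F a -> G a) -> forall a, G a -> F a.

Definition upset (n p : Z) (c : elt) : elt -> Prop :=
  fun a => inA n p a /\ leA n c a.

Definition Rad (n p : Z) : elt -> Prop :=
  fun a => inA n p a /\ forall F, maximal_filter n p F -> F a.

(* Write elements as <x, al> with grade al in [0, p].  A proper filter cannot contain the
   bottom <(n,0),0>, which lies below everything.  A filter containing an element of grade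
   0 contains the bottom: by (P4) repeated multiplication by it raises the first coordinate
   until it is capped at n.  A filter containing an element of grade 0 < al < p contains
   one of grade 0: by (P1)-(P2) multiplication by it lowers a positive grade by p - al.
   Hence every proper filter consists of elements of grade p, i.e. lies inside the
   up-set of <(0,0),p>, which is itself a proper filter; a greatest proper filter is the
   unique maximal one and therefore also the radical. *)

From Stdlib Require Import ZArith Lia Bool.
Open Scope Z_scope.

Lemma lex_leb_lex_le x y : lex_leb x y = true <-> lex_le x y.
Proof.
  destruct x as [a b], y as [c d]; unfold lex_leb, lex_le; simpl.
  rewrite orb_true_iff, andb_true_iff, Z.ltb_lt, Z.eqb_eq, Z.leb_le; tauto.
Qed.

Lemma lex_min_cases x y : lex_min x y = x \/ lex_min x y = y.
Proof. unfold lex_min; destruct (lex_leb x y); auto. Qed.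

Section FiltersOfA.
Variables n p : Z.
Hypothesis p_pos : 0 < p.
Hypothesis n_nonneg : 0 <= n.

Lemma odot_grade0 x y :
  odot n p (x, 0) (y, 0) = (lex_min (n, 0) (fst x + fst y + 1, snd x + snd y), 0).
Proof. reflexivity. Qed.

Lemma odot_grade_pos x y al be : 1 <= al -> 1 <= be ->
  snd (odot n p (x, al) (y, be)) = if p <? al + be then al + be - p else 0.
Proof.
  intros Hal Hbe; unfold odot.
  rewrite (proj2 (Z.leb_le _ _) Hal), (proj2 (Z.leb_le _ _) Hbe); simpl.
  destruct (p <? al + be); reflexivity.
Qed.

Lemma odot_grade_top x y : odot n p (x, p) (y, p) = (lstar n x y, p).
Proof.
  unfold odot.
  rewrite (proj2 (Z.leb_le 1 p)), (proj2 (Z.ltb_lt p (p + p))) by lia; simpl.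
  f_equal; lia.
Qed.

Lemma botA_leA b : inA n p b -> leA n (botA n) b.
Proof.
  destruct b as [[m r] be]; unfold inA, leA, botA, lex_le, padd; simpl; intros Hb.
  destruct (Z.eq_dec be 0); [right; left | right; right]; lia.
Qed.

Lemma botA_inA : inA n p (botA n).
Proof. unfold inA, botA, lex_le; simpl; left; lia. Qed.

Lemma upset_unit_iff a :
  upset n p ((0, 0), p) a <-> inA n p a /\ snd a = p.
Proof.
  destruct a as [[m r] al]; unfold upset, inA, leA, lex_le, padd; simpl.
  split; intros H; lia.
Qed.

Section Filter.
Variable F : elt -> Prop.
Hypothesis F_filter : implicative_filter n p F.

Lemma filter_odot_closed a b : F a -> F b -> F (odot n p a b).
Proof. apply F_filter. Qed.

Lemma filter_inA a : F a -> inA n p a.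
Proof. apply F_filter. Qed.

Lemma filter_up_closed a b : F a -> inA n p b -> leA n a b -> F b.
Proof. apply F_filter. Qed.

Lemma filter_botA_full : F (botA n) -> forall a, inA n p a -> F a.
Proof. intros Fbot a Ha; exact (filter_up_closed _ _ Fbot Ha (botA_leA a Ha)). Qed.

Lemma filter_grade0_botA x : F (x, 0) -> F (botA n).
Proof.
  intros Fx.
  assert (Hx := filter_inA _ Fx).
  assert (Hx0 : 0 <= fst x) by (destruct x; unfold inA, lex_le in Hx; simpl in *; lia).
  assert (climb : forall k : nat, forall y, F (y, 0) -> n - Z.of_nat k < fst y -> F (botA n)).
  { induction k as [|k IH]; intros y Fy Hy.
    - exfalso; assert (Hi := filter_inA _ Fy).
      destruct y; unfold inA, lex_le in Hi; simpl in *; lia.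
    - assert (Fyx := filter_odot_closed _ _ Fy Fx); rewrite odot_grade0 in Fyx.
      destruct (lex_min_cases (n, 0) (fst y + fst x + 1, snd y + snd x)) as [E|E];
        rewrite E in Fyx; [exact Fyx|].
      apply (IH _ Fyx); simpl; lia. }
  apply (climb (Z.to_nat (n + 1)) x Fx); lia.
Qed.

Lemma filter_mid_grade0 x al : F (x, al) -> 0 < al < p -> exists y, F (y, 0).
Proof.
  intros Fx Hal.
  assert (descend : forall k : nat, forall y be, F (y, be) -> 0 < be <= Z.of_nat k ->
            exists z, F (z, 0)).
  { induction k as [|k IH]; intros y be Fy Hbe; [lia|].
    assert (Fyx := filter_odot_closed _ _ Fy Fx).
    assert (Hg := odot_grade_pos y x be al ltac:(lia) ltac:(lia)).
    destruct (odot n p (y, be) (x, al)) as [z g]; simpl in Hg; subst g.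
    destruct (p <? be + al) eqn:E; [|eauto].
    apply Z.ltb_lt in E; apply (IH _ _ Fyx); lia. }
  apply (descend (Z.to_nat al) x al Fx); lia.
Qed.

End Filter.

Lemma proper_filter_grade_top F a : proper_filter n p F -> F a -> snd a = p.
Proof.
  intros [HF [b [Hb Nb]]] Fa.
  assert (Nbot : ~ F (botA n)) by (intro Fbot; exact (Nb (filter_botA_full F HF Fbot b Hb))).
  destruct a as [x al]; simpl.
  assert (Ha := filter_inA F HF _ Fa).
  destruct x; unfold inA in Ha; destruct Ha as [[_ [_ [ -> | -> ]]]|[_ [_ Hal]]]; [|reflexivity|].
  - destruct (Nbot (filter_grade0_botA F HF _ Fa)).
  - destruct (filter_mid_grade0 F HF _ _ Fa Hal) as [y Fy].
    destruct (Nbot (filter_grade0_botA F HF _ Fy)).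
Qed.

Lemma proper_filter_sub_upset F : proper_filter n p F ->
  forall a, F a -> upset n p ((0, 0), p) a.
Proof.
  intros HF a Fa; apply upset_unit_iff; split.
  - exact (filter_inA F (proj1 HF) _ Fa).
  - exact (proper_filter_grade_top F a HF Fa).
Qed.

Lemma upset_unit_proper : proper_filter n p (upset n p ((0, 0), p)).
Proof.
  split; [split; [|split; [|split]]|].
  - intros a Ha; apply Ha.
  - apply upset_unit_iff; unfold inA, topA, lex_le; simpl; split; [left|]; lia.
  - intros [x al] [y be] Hx Hy.
    apply upset_unit_iff in Hx as [Hx Hal]; apply upset_unit_iff in Hy as [Hy Hbe].
    simpl in Hal, Hbe; subst al be.
    rewrite odot_grade_top; apply upset_unit_iff; split; [|reflexivity].
    destruct x, y; unfold inA, lex_le in Hx, Hy; simpl in Hx, Hy.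
    unfold inA, lstar, lex_max, psub, padd; simpl.
    destruct (lex_leb (0, 0) _) eqn:E; [apply lex_leb_lex_le in E|];
      unfold lex_le in *; simpl in *; left; lia.
  - intros [x al] [y be] Hx Hy Hxy; apply upset_unit_iff in Hx as [Hx Hal].
    simpl in Hal; subst al.
    apply upset_unit_iff; split; [exact Hy|].
    destruct x, y; unfold inA, leA, lex_le in *; simpl in *; lia.
  - exists (botA n); split; [apply botA_inA|].
    rewrite upset_unit_iff; unfold botA; simpl; lia.
Qed.

End FiltersOfA.

Section GreatestProperFilter.
Variables n p : Z.
Variable U : elt -> Prop.
Hypothesis U_proper : proper_filter n p U.
Hypothesis U_greatest : forall F, proper_filter n p F -> forall a, F a -> U a.

Lemma greatest_proper_filter_maximal : maximal_filter n p U.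
Proof. split; [exact U_proper|]; intros G HG _; exact (U_greatest G HG). Qed.

Lemma maximal_filter_eq_greatest F : maximal_filter n p F -> forall a, F a <-> U a.
Proof.
  intros [HF Hmax] a; split.
  - exact (U_greatest F HF a).
  - exact (Hmax U U_proper (U_greatest F HF) a).
Qed.

Lemma Rad_eq_greatest a : Rad n p a <-> U a.
Proof.
  split.
  - intros [_ HRad]; exact (HRad U greatest_proper_filter_maximal).
  - intros Ua; split.
    + exact (proj1 (proj1 U_proper) a Ua).
    + intros F HF; exact (proj2 (maximal_filter_eq_greatest F HF a) Ua).
Qed.

End GreatestProperFilter.

Theorem corollary3p3 (n p : Z) (hn : 1 <= n) (hp : 1 <= p) :
  maximal_filter n p (upset n p ((0, 0), p)) /\
  (forall F, maximal_filter n p F ->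
     forall a, F a <-> upset n p ((0, 0), p) a) /\
  (forall a, Rad n p a <-> upset n p ((0, 0), p) a).
Proof.
  assert (Hproper := upset_unit_proper n p ltac:(lia) ltac:(lia)).
  assert (Hgreatest := proper_filter_sub_upset n p ltac:(lia) ltac:(lia)).
  split; [|split].
  - exact (greatest_proper_filter_maximal n p _ Hproper Hgreatest).
  - exact (maximal_filter_eq_greatest n p _ Hproper Hgreatest).
  - exact (Rad_eq_greatest n p _ Hproper Hgreatest).
Qed.
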